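(* Let $\lambda = \lambda(d)$ be a function with $\lambda(d) \le d$ for all $d$ and $\lambda(d) \to \infty$ as $d \to \infty$. For every $\varepsilon > 0$ there exists $d_0$ such that the following holds for every $d \ge d_0$: if $G$ is a graph with $n$ vertices, average degree at most $d$, and at most $d^2 n / \lambda^3$ triangles (where $\lambda = \lambda(d)$), then $$\alpha(G) \ge (1 - \varepsilon) \frac{n \log \lambda}{d}.$$ (In the paper's asymptotic notation: $\alpha(G) \ge (1+o(1)) \frac{n \log \lambda}{d}$ as $d \to \infty$.)
   Context: $\alpha(G)$ denotes the independence number of $G$ (the size of a largest independent set), and $\log$ is the natural logarithm. *)

From HB Require Import structures.
From mathcomp Require Import all_boot all_order all_algebra.
From mathcomp Require Import all_classical all_reals all_analysis.
Set Implicit Arguments. Unset Strict Implicit. Unset Printing Implicit Defensive.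
Import Order.TTheory GRing.Theory Num.Theory.

Definition simple_graph (T : finType) (e : rel T) : Prop :=
  symmetric e /\ irreflexive e.

Definition num_edges (T : finType) (e : rel T) : nat :=
  #|[set S : {set T} | (#|S| == 2) && [forall x in S, forall y in S, (x != y) ==> e x y]]|.

Definition num_triangles (T : finType) (e : rel T) : nat :=
  #|[set S : {set T} | (#|S| == 3) && [forall x in S, forall y in S, (x != y) ==> e x y]]|.

Definition independent (T : finType) (e : rel T) (S : {set T}) : bool :=
  [forall x in S, forall y in S, ~~ e x y].

Definition alpha (T : finType) (e : rel T) : nat :=
  \max_(S : {set T} | independent e S) #|S|.

From HB Require Import structures.
From mathcomp Require Import all_boot all_order all_algebra.
From mathcomp Require Import all_classical all_reals all_analysis.
From mathcomp Require Import ring lra zify.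
Import Order.TTheory GRing.Theory Num.Theory.
Import numFieldNormedType.Exports.
(* Re-imported so that finset's subsetP, set0, ... shadow their classical_sets homonyms. *)
From mathcomp Require Import fintype finset.

Set Implicit Arguments. Unset Strict Implicit. Unset Printing Implicit Defensive.
Local Open Scope ring_scope.

(* Shearer's argument on a random induced subgraph.  Let f be convex, nonincreasing, with
   f(0) <= 1 and Shearer's inequality (y + 1) f(y) <= 1 + (y - y^2) f'(y).  Every
   triangle-free vertex set U contains an independent set of size |U| f(d(U)), d(U) the
   average degree: averaging over v in U, convexity of f and Cauchy-Schwarz on the degrees
   show that deleting some v with its neighbourhood and recursing loses at most one vertex.
   Now keep each vertex with probability p = lam/d and delete one vertex of each surviving
   triangle.  Bounding f(d(S')) by its tangent at lam makes the resulting lower bound on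
   alpha linear in |S|, in the number of triangles of S and in its degree sum, so its
   expectation is explicit: alpha >= (n/d) ((lam - 1) f(lam) + lam f'(lam)).  For
   f(y) = kappa ln(1 + y/a) / y with a = 1 + 4/eps and kappa = a/(a + 2) this is at least
   (1 - eps) (n/d) ln lam as soon as ln lam >= 2 (ln a + 2/a) / eps. *)

Section LogRatio.
Variable R : realType.
Implicit Types x y z : R.

Lemma ge0_derive_le (f df : R -> R) (a b : R) : a <= b ->
  (forall x, a <= x <= b -> is_derive x 1 f (df x)) ->
  (forall x, a < x < b -> 0 <= df x) -> f a <= f b.
Proof.
move=> ab f_df df_ge0.
have itv_cc x : x \in `]a, b[ -> a <= x <= b.
  by rewrite in_itv /= => /andP[/ltW -> /ltW ->].
apply: (@ger0_derive1_le_cc R f a b) => //; rewrite ?in_itv /= ?lexx ?ab //.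
- by move=> x /itv_cc /f_df [].
- move=> x xab; have dfx := f_df x (itv_cc x xab).
  by rewrite derive1E derive_val; apply: df_ge0; rewrite in_itv /= in xab.
- by apply: derivable_within_continuous => x /f_df [].
Qed.

Lemma is_derive_ln1p z : -1 < z -> is_derive z 1 (fun x => ln (x + 1)) (z + 1)^-1.
Proof.
move=> z_gtN1.
have dln : is_derive (z + 1) 1 (@ln R) (z + 1)^-1 by apply: is_derive1_ln; lra.
have dS : is_derive z 1 (fun x : R => x + 1) 1 by apply: is_derive_eq; rewrite addr0.
by have := @is_derive1_comp R (@ln R) (fun x => x + 1) z _ _ dln dS; rewrite mulr1.
Qed.

Lemma ln1p_ge z : 0 <= z -> z / (z + 1) <= ln (z + 1).
Proof.
move=> z_ge0; have z1_gt0 : 0 < z + 1 by lra.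
have := @le_ln1Dx R (- (z / (z + 1))).
have -> : 1 + - (z / (z + 1)) = (z + 1)^-1 by field; lra.
rewrite lnV ?posrE // lerN2; apply.
by rewrite ltrNl opprK ltr_pdivrMr //; lra.
Qed.

Lemma ln1p_le z : 0 <= z -> ln (z + 1) <= z.
Proof. by move=> z_ge0; rewrite addrC; apply: le_ln1Dx; lra. Qed.

Lemma ln1p_le_quad z : 0 <= z -> 2 * (z + 1) * ln (z + 1) <= z * (2 + z).
Proof.
move=> z_ge0; rewrite -subr_ge0.
have -> : 0 = 0 * (2 + 0) - 2 * (0 + 1) * ln (0 + 1) :> R by rewrite add0r ln1; ring.
apply: (@ge0_derive_le (fun x => x * (2 + x) - 2 * (x + 1) * ln (x + 1))
  (fun x => 2 * x - 2 * ln (x + 1))) => // x /andP[x_ge0 _].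
- have dln := @is_derive_ln1p x ltac:(lra).
  by apply: is_derive_eq; rewrite /GRing.scale /=; field; lra.
- by have := ln1p_le (ltW x_ge0); lra.
Qed.

Lemma ln1p_ge_quad z : 0 <= z -> 2 * z + 3 * z ^+ 2 <= 2 * (z + 1) ^+ 2 * ln (z + 1).
Proof.
move=> z_ge0; rewrite -subr_ge0.
have -> : 0 = 2 * (0 + 1) ^+ 2 * ln (0 + 1) - (2 * 0 + 3 * 0 ^+ 2) :> R.
  by rewrite add0r ln1; ring.
apply: (@ge0_derive_le (fun x => 2 * (x + 1) ^+ 2 * ln (x + 1) - (2 * x + 3 * x ^+ 2))
  (fun x => 4 * (x + 1) * ln (x + 1) - 4 * x)) => // x /andP[x_ge0 _].
- have dln := @is_derive_ln1p x ltac:(lra).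
  by apply: is_derive_eq; rewrite /GRing.scale /=; field; lra.
- have := ln1p_ge (ltW x_ge0); rewrite ler_pdivrMr; lra.
Qed.

Definition logq z : R := if z == 0 then 1 else ln (z + 1) / z.
Definition dlogq z : R := (z / (z + 1) - ln (z + 1)) / z ^+ 2.

Lemma logqE z : z != 0 -> logq z = ln (z + 1) / z.
Proof. by rewrite /logq => /negPf ->. Qed.

Lemma is_derive_logq z : 0 < z -> is_derive z 1 (fun x => ln (x + 1) / x) (dlogq z).
Proof.
move=> z_gt0; have dln := @is_derive_ln1p z ltac:(lra).
have dinv : is_derive z 1 (fun x : R => x^-1) (- z ^- 2 *: 1).
  by apply: (@is_deriveV R id z 1 1); lra.
by apply: (is_derive_eq (is_deriveM dln dinv)); rewrite /GRing.scale /= /dlogq; field; lra.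
Qed.

Lemma is_derive_dlogq z : 0 < z ->
  is_derive z 1 dlogq
    ((2 * (z + 1) ^+ 2 * ln (z + 1) - (2 * z + 3 * z ^+ 2)) / ((z + 1) ^+ 2 * z ^+ 3)).
Proof.
move=> z_gt0; have dln := @is_derive_ln1p z ltac:(lra).
have z_neq0 : z != 0 by lra.
have z1_neq0 : z + 1 != 0 by lra.
have zsq_neq0 : z ^+ 2 != 0 by rewrite expf_neq0.
by rewrite /dlogq; apply: is_derive_eq; rewrite /GRing.scale /=; field; lra.
Qed.

Lemma ler_dlogq x y : 0 < x -> x <= y -> dlogq x <= dlogq y.
Proof.
move=> x_gt0 xy; apply: (ge0_derive_le (df := fun t =>
  (2 * (t + 1) ^+ 2 * ln (t + 1) - (2 * t + 3 * t ^+ 2)) / ((t + 1) ^+ 2 * t ^+ 3))) => //.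
  by move=> t /andP[t_gt0 _]; apply: is_derive_dlogq; lra.
move=> t /andP[t_gt0 _]; apply: divr_ge0; first by rewrite subr_ge0 ln1p_ge_quad //; lra.
by rewrite mulr_ge0 // exprn_ge0 //; lra.
Qed.

Lemma logq_dlogq z : 0 < z -> logq z + z * dlogq z = (z + 1)^-1.
Proof. by move=> z_gt0; rewrite logqE ?gt_eqF // /dlogq; field; lra. Qed.

Lemma dlogq_le0 z : 0 < z -> dlogq z <= 0.
Proof.
move=> z_gt0; apply: mulr_le0_ge0; first by rewrite subr_le0 ln1p_ge //; lra.
by rewrite invr_ge0 exprn_ge0 //; lra.
Qed.

Lemma logq_le1 z : 0 <= z -> logq z <= 1.
Proof.
rewrite /logq; case: eqP => // /eqP z_neq0 z_ge0.
by rewrite ler_pdivrMr ?mul1r ?ln1p_le //; lra.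
Qed.

Lemma logq_gt0 z : 0 < z -> 0 < logq z.
Proof. by move=> z_gt0; rewrite logqE ?gt_eqF // divr_gt0 // ln_gt0 //; lra. Qed.

Lemma logq_tangent_at0 z0 : 0 < z0 -> logq z0 + dlogq z0 * (0 - z0) <= logq 0.
Proof.
move=> z0_gt0; rewrite /logq eqxx gt_eqF // /dlogq -subr_ge0.
have -> : 1 - (ln (z0 + 1) / z0 + (z0 / (z0 + 1) - ln (z0 + 1)) / z0 ^+ 2 * (0 - z0))
    = (z0 * (2 + z0) - 2 * (z0 + 1) * ln (z0 + 1)) / (z0 * (z0 + 1)).
  by field; lra.
by rewrite divr_ge0 ?subr_ge0 ?ln1p_le_quad ?mulr_ge0 //; lra.
Qed.

Lemma logq_tangent z z0 : 0 <= z -> 0 < z0 -> logq z0 + dlogq z0 * (z - z0) <= logq z.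
Proof.
move=> z_ge0 z0_gt0; have [->|z_neq0] := eqVneq z 0; first exact: logq_tangent_at0.
have z_gt0 : 0 < z by lra.
pose gap t := ln (t + 1) / t - (ln (z0 + 1) / z0 + dlogq z0 * (t - z0)).
have dgap (t : R) : 0 < t -> is_derive t 1 gap (dlogq t - dlogq z0).
  move=> t_gt0; have dlogq_t := is_derive_logq t_gt0.
  by apply: is_derive_eq; rewrite /GRing.scale /=; ring.
have gap_z0 : gap z0 = 0 by rewrite /gap subrr mulr0 addr0 subrr.
rewrite !logqE ?gt_eqF // -subr_ge0 -/(gap z) -gap_z0.
have [z0_le_z|z_lt_z0] := leP z0 z.
  apply: (ge0_derive_le z0_le_z) => t /andP[t_gt0 _]; first by apply: dgap; lra.
  by rewrite subr_ge0 ler_dlogq //; lra.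
rewrite -lerN2; apply: (@ge0_derive_le (fun t => - gap t) (fun t => - (dlogq t - dlogq z0))).
- lra.
- by move=> t /andP[t_gt0 _]; apply: is_deriveN; apply: dgap; lra.
- by move=> t /andP[t_gt0 t_lt]; rewrite oppr_ge0 subr_le0 ler_dlogq //; lra.
Qed.
End LogRatio.

Section RealSums.
Variable R : realFieldType.

Definition ind (b : bool) : R := if b then 1 else 0.

Lemma ind_ge0 b : 0 <= ind b. Proof. by case: b; rewrite /ind. Qed.

Lemma sum_ind (I : finType) (A : {pred I}) (P : pred I) :
  \sum_(i in A) ind (P i) = #|[predI A & P]|%:R.
Proof. by rewrite /ind -big_mkcondr sumr_const. Qed.

Lemma sum_subset_ind (I : finType) (W U : {set I}) (F : I -> R) : W \subset U ->
  \sum_(i in W) F i = \sum_(i in U) ind (i \in W) * F i.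
Proof.
move=> /subsetP WU; rewrite big_mkcond [RHS]big_mkcond; apply: eq_bigr => i _.
case: (boolP (i \in W)) => [/WU -> | iW]; rewrite /ind ?mul1r //.
by case: (_ \in U); rewrite ?mul0r.
Qed.

Lemma exists_ge_average (I : finType) (A : {set I}) (g : I -> R) c :
  (0 < #|A|)%N -> #|A|%:R * c <= \sum_(i in A) g i -> exists2 i, i \in A & c <= g i.
Proof.
move=> /card_gt0P[i0 i0A] le_sum; apply/exists_inP; apply: contraLR le_sum.
move=> /exists_inPn g_lt; rewrite -ltNge mulr_natl -sumr_const.
apply: ltr_sum => [|i /g_lt]; last by rewrite ltNge.
by apply/hasP; exists i0; rewrite ?mem_index_enum.
Qed.

Lemma exists_ge_expectation (I : finType) (i0 : I) (w X : I -> R) :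
  (forall i, 0 <= w i) -> \sum_i w i = 1 -> exists i, \sum_j w j * X j <= X i.
Proof.
move=> w_ge0 w_sum1; have [i _ X_le] := @arg_maxP _ R I i0 xpredT X isT.
exists i; rewrite -[leRHS]mul1r -w_sum1 mulr_suml.
by apply: ler_sum => j _; apply: ler_wpM2l; [exact: w_ge0 | exact: X_le].
Qed.

Lemma sqr_sum_le (I : finType) (A : {set I}) (a : I -> R) :
  (\sum_(i in A) a i) ^+ 2 <= #|A|%:R * \sum_(i in A) a i ^+ 2.
Proof.
have [/eqP|A_gt0] := posnP #|A|.
  by rewrite cards_eq0 => /eqP->; rewrite big_set0 expr0n cards0 mul0r.
set N : R := #|A|%:R; set S1 := \sum_(i in A) a i; set S2 := \sum_(i in A) a i ^+ 2.
have N_gt0 : 0 < N by rewrite ltr0n.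
have : 0 <= \sum_(i in A) (a i - S1 / N) ^+ 2 by apply: sumr_ge0 => i _; apply: sqr_ge0.
have -> : \sum_(i in A) (a i - S1 / N) ^+ 2 = S2 - 2 * (S1 / N) * S1 + (S1 / N) ^+ 2 * N.
  rewrite (eq_bigr (fun i => a i ^+ 2 - 2 * (S1 / N) * a i + (S1 / N) ^+ 2)) => [|i _];
    last by ring.
  by rewrite !big_split /= sumrN -mulr_sumr sumr_const mulr_natr.
have -> : S2 - 2 * (S1 / N) * S1 + (S1 / N) ^+ 2 * N = (N * S2 - S1 ^+ 2) / N.
  by field; rewrite gt_eqF.
by rewrite pmulr_lge0 ?invr_gt0 // subr_ge0.
Qed.
End RealSums.

Section Degrees.
Variables (R : realFieldType) (T : finType) (e : rel T).
Implicit Types (U W S I : {set T}) (u v x y : T).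

Definition deg_in U x : R := \sum_(y in U) ind R (e x y).
Definition deg_sum U : R := \sum_(x in U) deg_in U x.
Definition triangle_free U := forall x y z,
  x \in U -> y \in U -> z \in U -> e x y -> e y z -> e x z -> False.
Definition far U v := U :\: (v |: [set y | e v y]).

Lemma deg_in_ge0 U x : 0 <= deg_in U x.
Proof. by apply: sumr_ge0 => y _; apply: ind_ge0. Qed.

Lemma deg_sum_ge0 U : 0 <= deg_sum U.
Proof. by apply: sumr_ge0 => x _; apply: deg_in_ge0. Qed.

Lemma deg_sum_pairs U :
  deg_sum U = \sum_x \sum_y ind R ([set x; y] \subset U) * ind R (e x y).
Proof.
rewrite /deg_sum big_mkcond; apply: eq_bigr => x _.
rewrite /deg_in big_mkcond /=; case: (boolP (x \in U)) => xU.
  apply: eq_bigr => y _; rewrite subUset !sub1set xU /ind.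
  by case: (y \in U); rewrite ?mul1r ?mul0r.
by rewrite big1 // => y _; rewrite subUset !sub1set (negPf xU) /ind mul0r.
Qed.

Lemma deg_sum_subset W U : W \subset U -> deg_sum W <= deg_sum U.
Proof.
move=> WU; rewrite !deg_sum_pairs; apply: ler_sum => x _; apply: ler_sum => y _.
apply: ler_wpM2r; first exact: ind_ge0.
rewrite /ind; case: (boolP ([set x; y] \subset W)) => xyW.
  by rewrite (subset_trans xyW WU).
by case: (_ \subset U).
Qed.

Lemma deg_sum_eq0_independent U : deg_sum U = 0 -> independent e U.
Proof.
move=> /(psumr_eq0P (fun x _ => deg_in_ge0 U x)) deg0.
apply/forall_inP => x xU; apply/forall_inP => y yU; apply/negP => exy.
have := psumr_eq0P (fun y _ => ind_ge0 R (e x y)) (deg0 x xU) yU.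
by rewrite /ind exy; apply/eqP; rewrite oner_eq0.
Qed.

Lemma triangle_free_subset W U : W \subset U -> triangle_free U -> triangle_free W.
Proof. by move=> /subsetP WU tfU x y z /WU xU /WU yU /WU zU; apply: tfU. Qed.

Lemma in_far U v y : (y \in far U v) = [&& y != v, ~~ e v y & y \in U].
Proof. by rewrite !inE negb_or andbA. Qed.

Lemma far_subset U v : far U v \subset U.
Proof. exact: subsetDl. Qed.

Lemma card_far_lt U v : v \in U -> (#|far U v| < #|U|)%N.
Proof.
move=> vU; rewrite (cardsD1 v U) vU add1n ltnS subset_leq_card //.
by apply/subsetP => y; rewrite in_far !inE => /and3P[-> _ ->].
Qed.

Hypotheses (e_sym : symmetric e) (e_irr : irreflexive e).

Lemma independent_setU1_far U v I :
  I \subset far U v -> independent e I -> independent e (v |: I).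
Proof.
move=> /subsetP IU indI; have nbr_far y : y \in I -> ~~ e v y.
  by move=> /IU; rewrite in_far => /and3P[].
apply/forall_inP => x; rewrite in_setU1 => /predU1P[-> | xI].
  by apply/forall_inP => y; rewrite in_setU1 => /predU1P[-> | /nbr_far]; rewrite ?e_irr.
apply/forall_inP => y; rewrite in_setU1 => /predU1P[-> | yI]; first by rewrite e_sym nbr_far.
by have /forall_inP/(_ x xI)/forall_inP := indI; apply.
Qed.

Lemma card_far U v : v \in U -> #|far U v|%:R = #|U|%:R - 1 - deg_in U v :> R.
Proof.
move=> vU; set N := [set y | e v y].
have vUN : v \in U :\: N by rewrite !inE e_irr vU.
have -> : far U v = (U :\: N) :\ v by apply/setP => y; rewrite in_far !inE.
rewrite /deg_in sum_ind -(cardsID N U) (cardsD1 v (U :\: N)) vUN.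
have -> : #|[predI U & e v]| = #|U :&: N| by apply: eq_card => y; rewrite !inE.
by rewrite !natrD /=; ring.
Qed.

Lemma deg_sum_far U v : triangle_free U -> v \in U ->
  deg_sum (far U v) + 2 * \sum_(u in U) ind R (e v u) * deg_in U u <= deg_sum U.
Proof.
move=> tfU vU.
have -> : deg_sum (far U v) = \sum_(x in U) \sum_(y in U)
    ind R (x \in far U v) * ind R (y \in far U v) * ind R (e x y).
  rewrite /deg_sum (sum_subset_ind _ (far_subset U v)); apply: eq_bigr => x _.
  rewrite /deg_in (sum_subset_ind _ (far_subset U v)) mulr_sumr.
  by apply: eq_bigr => y _; ring.
have -> : 2 * \sum_(u in U) ind R (e v u) * deg_in U u =
    \sum_(x in U) \sum_(y in U) (ind R (e v x) + ind R (e v y)) * ind R (e x y).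
  have nbr_deg : \sum_(u in U) ind R (e v u) * deg_in U u =
      \sum_(x in U) \sum_(y in U) ind R (e v x) * ind R (e x y).
    by apply: eq_bigr => x _; rewrite /deg_in mulr_sumr.
  have nbr_deg' : \sum_(u in U) ind R (e v u) * deg_in U u =
      \sum_(x in U) \sum_(y in U) ind R (e v y) * ind R (e x y).
    rewrite nbr_deg exchange_big; apply: eq_bigr => x _; apply: eq_bigr => y _.
    by rewrite (e_sym y x).
  rewrite mulr_natl mulr2n {1}nbr_deg nbr_deg' -big_split; apply: eq_bigr => x _.
  by rewrite -big_split; apply: eq_bigr => y _ /=; ring.
rewrite -big_split; apply: ler_sum => x xU; rewrite -big_split; apply: ler_sum => y yU.
rewrite !in_far xU yU /ind !andbT /=.
(* Triangle-freeness: no edge xy of U has both ends adjacent to v. *)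
case exy: (e x y); case evx: (e v x); case evy: (e v y);
  first by case: (tfU v x y).
all: by case: (x != v); case: (y != v); rewrite /=; lra.
Qed.

Lemma sum_nbr_deg U :
  \sum_(v in U) \sum_(u in U) ind R (e v u) * deg_in U u = \sum_(u in U) deg_in U u ^+ 2.
Proof.
rewrite exchange_big; apply: eq_bigr => u _; rewrite -mulr_suml expr2; congr (_ * _).
by apply: eq_bigr => v _; rewrite e_sym.
Qed.

Lemma sum_card_far U :
  \sum_(v in U) #|far U v|%:R = (#|U|%:R - 1) * #|U|%:R - deg_sum U :> R.
Proof.
rewrite (eq_bigr (fun v => #|U|%:R - 1 - deg_in U v)) => [|v vU]; last exact: card_far.
by rewrite !sumrB !sumr_const /deg_sum -[_ *+ #|U|]mulr_natr; ring.
Qed.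

Lemma sum_deg_sum_far U : triangle_free U ->
  \sum_(v in U) deg_sum (far U v) <= deg_sum U * #|U|%:R - 2 * \sum_(u in U) deg_in U u ^+ 2.
Proof.
move=> tfU; rewrite -sum_nbr_deg mulr_sumr mulr_natr -sumr_const -sumrB.
by apply: ler_sum => v vU; rewrite lerBrDr; apply: deg_sum_far.
Qed.

End Degrees.

Section EdgesTriangles.
Variables (R : realFieldType) (T : finType) (e : rel T).
Hypotheses (e_sym : symmetric e) (e_irr : irreflexive e).
Implicit Types (S : {set T}) (x y z : T).

Definition clique_sets k := [set S : {set T} | (#|S| == k)%N &&
  [forall x in S, forall y in S, (x != y) ==> e x y]].

Definition triangles_in S : nat := #|[set D in clique_sets 3 | D \subset S]|.

Lemma adj_neq x y : e x y -> x != y.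
Proof. by apply: contraTneq => ->; rewrite e_irr. Qed.

Lemma triangle_in_clique_sets x y z :
  e x y -> e y z -> e x z -> [set x; y; z] \in clique_sets 3.
Proof.
move=> exy eyz exz; rewrite inE; apply/andP; split.
  rewrite -setUA cardsU1 cards2 !inE negb_or !adj_neq //.
apply/forall_inP => a; rewrite !inE -orbA => /or3P[] /eqP->;
apply/forall_inP => b; rewrite !inE -orbA => /or3P[] /eqP-> /=;
by rewrite ?eqxx // ?(e_sym y x) ?(e_sym z x) ?(e_sym z y) ?exy ?eyz ?exz ?implybT.
Qed.

Lemma exists_triangle_free_subset S : exists S' : {set T},
  [/\ S' \subset S, triangle_free e S' & (#|S| <= #|S'| + triangles_in S)%N].
Proof.
set TS := [set D in clique_sets 3 | D \subset S].
set hit := [set x | Some x \in [set [pick w in D] | D : {set T} in TS]].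
exists (S :\: hit); split; first exact: subsetDl.
- move=> x y z; rewrite !inE => /andP[xh xS] /andP[yh yS] /andP[zh zS] exy eyz exz.
  have xyzT : [set x; y; z] \in TS.
    rewrite inE triangle_in_clique_sets //=; apply/subsetP => w.
    by rewrite !inE -orbA => /or3P[] /eqP->.
  have := imset_f (fun D : {set T} => [pick w in D]) xyzT.
  case: pickP => [w | /(_ x)]; last by rewrite !inE eqxx.
  by rewrite !inE -orbA => /or3P[] /eqP-> hw; [move: xh | move: yh | move: zh]; rewrite hw.
- have card_hit : (#|hit| <= #|TS|)%N.
    rewrite -(card_imset hit (@Some_inj _)).
    apply: leq_trans (leq_imset_card (fun D : {set T} => [pick w in D]) TS).
    by apply: subset_leq_card; apply/subsetP => o /imsetP[x]; rewrite inE => hx ->.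
  rewrite -(cardsID hit S) /triangles_in -/TS.
  by have := subset_leq_card (subsetIr S hit); lia.
Qed.

Lemma num_edgesE : num_edges e = #|clique_sets 2|.
Proof. by []. Qed.

Lemma num_trianglesE : num_triangles e = #|clique_sets 3|.
Proof. by []. Qed.

Lemma independent_card_le_alpha S : independent e S -> (#|S| <= alpha e)%N.
Proof. exact: (@leq_bigmax_cond _ (independent e) (fun S => #|S|) S). Qed.

Lemma edge_in_clique_sets x y : e x y -> [set x; y] \in clique_sets 2.
Proof.
move=> exy; rewrite inE cards2 adj_neq //=.
apply/forall_inP => a /set2P[]->; apply/forall_inP => b /set2P[]->;
by rewrite ?eqxx // ?(e_sym y x) exy implybT.
Qed.

Lemma card_adj_pairs_le : (#|[set p : T * T | e p.1 p.2]| <= 2 * num_edges e)%N.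
Proof.
rewrite -sum1_card (partition_big (fun p : T * T => [set p.1; p.2]) (mem (clique_sets 2))) /=;
  last by move=> [a b]; rewrite inE; apply: edge_in_clique_sets.
rewrite num_edgesE mulnC -sum_nat_const; apply: leq_sum => S.
rewrite inE => /andP[/cards2P[a [b [ab ->]]] _].
apply: leq_trans (_ : #|[set (a, b); (b, a)]| <= 2)%N; last by rewrite cards2; case: (_ != _).
rewrite sum1_card; apply: subset_leq_card; apply/subsetP => [[u v]].
move=> /andP[]; rewrite !inE /= => /adj_neq uv /eqP uv_ab.
have u_ab : u \in [set a; b] by rewrite -uv_ab set21.
have v_ab : v \in [set a; b] by rewrite -uv_ab set22.
by move: u_ab v_ab uv => /set2P[]-> /set2P[]->; rewrite ?eqxx ?set21 ?set22 ?orbT /=; case.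
Qed.

Lemma sum_adj_le_edges : \sum_x \sum_y ind R (e x y) <= 2 * (num_edges e)%:R.
Proof.
rewrite pair_bigA /= /ind -big_mkcond sumr_const -natrM ler_nat.
by apply: leq_trans card_adj_pairs_le; rewrite cardsE.
Qed.

End EdgesTriangles.

Section RandomSubset.
Variables (R : realFieldType) (T : finType) (p : R).
Implicit Types (A S : {set T}).

Definition subset_weight S : R := \prod_i (if i \in S then p else 1 - p).

Lemma subset_weight_ge0 S : 0 <= p <= 1 -> 0 <= subset_weight S.
Proof. by move=> /andP[p_ge0 p_le1]; apply: prodr_ge0 => i _; case: (i \in S); lra. Qed.

Lemma sum_subset_weight_superset A :
  \sum_S subset_weight S * ind R (A \subset S) = p ^+ #|A|.
Proof.
transitivity (\prod_i (p + (if i \in A then 0 else 1 - p))); last first.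
  rewrite -prodr_const (big_mkcond (fun i => i \in A)) /=.
  by apply: eq_bigr => i _; case: (i \in A); rewrite ?addr0 ?subrKC.
rewrite bigA_distr; apply: eq_bigr => S _; rewrite /ind.
case: (boolP (A \subset S)) => [/subsetP AS | /subsetPn[i iA iS]].
  rewrite mulr1; apply: eq_bigr => i _.
  by case: (boolP (i \in A)) => [/AS -> | _]; case: (i \in S).
by rewrite mulr0 (bigD1 i) //= (negPf iS) iA mul0r.
Qed.

Lemma sum_subset_weight : \sum_S subset_weight S = 1.
Proof.
rewrite -(expr0 p) -(cards0 T) -sum_subset_weight_superset.
by apply: eq_bigr => S _; rewrite sub0set /ind mulr1.
Qed.

Lemma sum_subset_weight_card : \sum_S subset_weight S * #|S|%:R = p * #|T|%:R.
Proof.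
have card_ind S : #|S|%:R = \sum_i ind R ([set i] \subset S).
  by rewrite -sum1_card natr_sum big_mkcond; apply: eq_bigr => i _; rewrite sub1set.
under eq_bigr => S _ do rewrite card_ind mulr_sumr.
rewrite exchange_big /=.
under eq_bigr => i _ do rewrite sum_subset_weight_superset cards1 expr1.
by rewrite sumr_const mulr_natr.
Qed.

Lemma sum_subset_weight_deg_sum (e : rel T) : irreflexive e ->
  \sum_S subset_weight S * deg_sum R e S = p ^+ 2 * \sum_x \sum_y ind R (e x y).
Proof.
move=> e_irr; under eq_bigr => S _ do rewrite deg_sum_pairs mulr_sumr.
rewrite exchange_big mulr_sumr; apply: eq_bigr => x _ /=.
under eq_bigr => S _ do rewrite mulr_sumr.
rewrite exchange_big mulr_sumr; apply: eq_bigr => y _ /=.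
under eq_bigr => S _ do rewrite mulrA.
rewrite -mulr_suml sum_subset_weight_superset /ind.
by case: (boolP (e x y)) => [/(adj_neq e_irr) xy | _]; rewrite ?cards2 ?xy ?mulr0.
Qed.

Lemma sum_subset_weight_triangles (e : rel T) :
  \sum_S subset_weight S * (triangles_in e S)%:R = p ^+ 3 * (num_triangles e)%:R.
Proof.
have tri_ind S : (triangles_in e S)%:R = \sum_(D in clique_sets e 3) ind R (D \subset S).
  by rewrite sum_ind; congr (_%:R); apply: eq_card => D; rewrite !inE.
under eq_bigr => S _ do rewrite tri_ind mulr_sumr.
rewrite exchange_big num_trianglesE mulr_natr -sumr_const; apply: eq_bigr => D /=.
by rewrite inE => /andP[/eqP D3 _]; rewrite sum_subset_weight_superset D3.
Qed.

End RandomSubset.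

Section ShearerBound.
Variables (R : realFieldType) (T : finType) (e : rel T).
Hypotheses (e_sym : symmetric e) (e_irr : irreflexive e).
Variables f s : R -> R.
Hypothesis f_tangent : forall x y, 0 <= x -> 0 < y -> f y + s y * (x - y) <= f x.
Hypothesis s_le0 : forall y, 0 < y -> s y <= 0.
Hypothesis f_shearer : forall y, 0 < y -> 0 <= 1 - (y + 1) * f y + (y - y ^+ 2) * s y.
Hypothesis f0_le1 : f 0 <= 1.
Implicit Types (U W S I : {set T}) (v : T).

Definition avg_deg U := deg_sum R e U / #|U|%:R.

Lemma card_mul_f_tangent W y : 0 < y ->
  #|W|%:R * f y + s y * (deg_sum R e W - y * #|W|%:R) <= #|W|%:R * f (avg_deg W).
Proof.
move=> y_gt0; have [/eqP|W_gt0] := posnP #|W|.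
  rewrite cards_eq0 => /eqP->.
  by rewrite cards0 /deg_sum big_set0 !mul0r mulr0 subr0 mulr0 addr0.
have N_gt0 : (0 : R) < #|W|%:R by rewrite ltr0n.
have avg_ge0 : 0 <= avg_deg W by rewrite divr_ge0 ?deg_sum_ge0 ?ltW.
have -> : #|W|%:R * f y + s y * (deg_sum R e W - y * #|W|%:R)
    = #|W|%:R * (f y + s y * (avg_deg W - y)).
  by rewrite /avg_deg; field; rewrite gt_eqF.
by rewrite ler_wpM2l ?f_tangent // ltW.
Qed.

Lemma exists_good_vertex U : triangle_free e U -> 0 < deg_sum R e U ->
  exists2 v, v \in U &
    #|U|%:R * f (avg_deg U) <= 1 + #|far e U v|%:R * f (avg_deg (far e U v)).
Proof.
move=> tfU D_gt0.
have U_gt0 : (0 < #|U|)%N.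
  by rewrite lt0n cards_eq0; apply: contraTneq D_gt0 => ->; rewrite /deg_sum big_set0 ltxx.
apply: exists_ge_average => //.
set N : R := #|U|%:R; set D := deg_sum R e U; set y := avg_deg U.
set Q := \sum_(u in U) deg_in R e U u ^+ 2.
have N_gt0 : 0 < N by rewrite ltr0n.
have D_yN : D = y * N by rewrite /y /avg_deg -/D -/N; field; rewrite gt_eqF.
have y_gt0 : 0 < y by rewrite divr_gt0.
have s_y := s_le0 y_gt0.
have Q_ge : y ^+ 2 * N <= Q.
  have CS : D ^+ 2 <= N * Q := sqr_sum_le U (deg_in R e U).
  by rewrite -(ler_pM2l N_gt0); apply: le_trans CS; rewrite D_yN; lra.
have sum_far : \sum_(v in U) #|far e U v|%:R = (N - 1) * N - D := sum_card_far R e_irr U.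
have sum_deg_far : \sum_(v in U) deg_sum R e (far e U v) <= D * N - 2 * Q :=
  sum_deg_sum_far R e_sym tfU.
apply: le_trans (_ : \sum_(v in U) (1 + (f y - s y * y) * #|far e U v|%:R
    + s y * deg_sum R e (far e U v)) <= _); last first.
  apply: ler_sum => v _; rewrite -addrA lerD2l.
  by have := card_mul_f_tangent (far e U v) y_gt0; lra.
rewrite !big_split /= -!mulr_sumr sum_far sumr_const -mulr_natr -/N.
have far_term := ler_wnM2l s_y sum_deg_far.
have sqr_term := ler_wnM2l s_y Q_ge.
have shearer_term := mulr_ge0 (ltW N_gt0) (f_shearer y_gt0).
by rewrite D_yN in far_term *; lra.
Qed.

Lemma shearer_independent U : triangle_free e U ->
  exists I, [/\ I \subset U, independent e I & #|U|%:R * f (avg_deg U) <= #|I|%:R].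
Proof.
have [n] := ubnP #|U|; elim: n U => // n IHn U /ltnSE U_le_n tfU.
have [D0 | D_neq0] := eqVneq (deg_sum R e U) 0.
  exists U; split; [exact: subxx | exact: deg_sum_eq0_independent D0 |].
  by rewrite /avg_deg D0 mul0r -[leRHS]mulr1 ler_wpM2l ?ler0n.
have D_gt0 : 0 < deg_sum R e U by rewrite lt_def D_neq0 deg_sum_ge0.
have [v vU v_good] := exists_good_vertex tfU D_gt0.
have [I [I_far indI cardI]] := IHn (far e U v) (leq_trans (card_far_lt e vU) U_le_n)
  (triangle_free_subset (far_subset e U v) tfU).
have vI : v \notin I by apply: contraTN isT => /(subsetP I_far); rewrite in_far eqxx.
exists (v |: I); split.
- by rewrite subUset sub1set vU (subset_trans I_far (far_subset e U v)).
- exact: (independent_setU1_far e_sym e_irr I_far indI).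
- by rewrite cardsU1 vI natrD /= mulr1n; lra.
Qed.

Hypothesis f_ge0 : forall y, 0 < y -> 0 <= f y.

Lemma tangent_intercept_ge0 y : 0 < y -> 0 <= f y - s y * y.
Proof. by move=> y_gt0; have := f_ge0 y_gt0; have := s_le0 y_gt0; nra. Qed.

Lemma alpha_ge_tangent_subset lam S : 0 < lam ->
  (f lam - s lam * lam) * (#|S|%:R - (triangles_in e S)%:R) + s lam * deg_sum R e S
    <= (alpha e)%:R.
Proof.
move=> lam_gt0; have s_lam := s_le0 lam_gt0.
have [S' [S'S tfS' cardS']] := exists_triangle_free_subset e_sym e_irr S.
have [I [_ indI cardI]] := shearer_independent tfS'.
have c_ge0 := tangent_intercept_ge0 lam_gt0.
have deg_le : s lam * deg_sum R e S <= s lam * deg_sum R e S'.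
  exact: (ler_wnM2l s_lam (deg_sum_subset R e S'S)).
have card_le : (f lam - s lam * lam) * (#|S|%:R - (triangles_in e S)%:R)
    <= (f lam - s lam * lam) * #|S'|%:R.
  by rewrite ler_wpM2l // lerBlDr -natrD ler_nat.
have alpha_ge : (#|I|%:R : R) <= (alpha e)%:R.
  by rewrite ler_nat independent_card_le_alpha.
have := card_mul_f_tangent S' lam_gt0; lra.
Qed.

Lemma alpha_ge_sampling d lam : 0 < lam <= d ->
  (2 * num_edges e)%:R <= d * #|T|%:R ->
  (num_triangles e)%:R <= d ^+ 2 * #|T|%:R / lam ^+ 3 ->
  #|T|%:R / d * ((lam - 1) * f lam + lam * s lam) <= (alpha e)%:R.
Proof.
move=> /andP[lam_gt0 lam_le_d] edges_le triangles_le.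
have d_gt0 : 0 < d := lt_le_trans lam_gt0 lam_le_d.
set n : R := #|T|%:R; set p := lam / d; set c := f lam - s lam * lam.
have p_gt0 : 0 < p by rewrite divr_gt0.
have p01 : 0 <= p <= 1 by rewrite ltW //= ler_pdivrMr ?mul1r.
pose X S := c * (#|S|%:R - (triangles_in e S)%:R) + s lam * deg_sum R e S.
have [S0 XS] := exists_ge_expectation set0 X (fun S => subset_weight_ge0 S p01)
  (sum_subset_weight T p).
apply: le_trans (alpha_ge_tangent_subset S0 lam_gt0); apply: le_trans XS.
set P := \sum_x \sum_y ind R (e x y); set t : R := (num_triangles e)%:R.
have -> : \sum_S subset_weight p S * X S = c * (p * n - p ^+ 3 * t) + s lam * (p ^+ 2 * P).
  rewrite (eq_bigr (fun S => c * (subset_weight p S * #|S|%:R)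
    - c * (subset_weight p S * (triangles_in e S)%:R)
    + s lam * (subset_weight p S * deg_sum R e S))) => [|S _]; last by rewrite /X; ring.
  rewrite !big_split /= sumrN -!mulr_sumr sum_subset_weight_card.
  by rewrite sum_subset_weight_triangles sum_subset_weight_deg_sum // mulrBr.
have P_le : P <= d * n.
  by apply: le_trans (sum_adj_le_edges R e_sym e_irr) _; rewrite -natrM.
have t_le : p ^+ 3 * t <= n / d.
  have -> : n / d = p ^+ 3 * (d ^+ 2 * n / lam ^+ 3) by rewrite /p; field; rewrite !gt_eqF.
  by rewrite ler_wpM2l // exprn_ge0 // ltW.
have c_ge0 : 0 <= c := tangent_intercept_ge0 lam_gt0.
have t_term := ler_wpM2l c_ge0 t_le.
have P_term := ler_wnM2l (s_le0 lam_gt0) (ler_wpM2l (exprn_ge0 2 (ltW p_gt0)) P_le).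
have -> : n / d * ((lam - 1) * f lam + lam * s lam)
    = c * (p * n) - c * (n / d) + s lam * (p ^+ 2 * (d * n)).
  by rewrite /c /p; field; rewrite gt_eqF.
lra.
Qed.

End ShearerBound.

Section ScaledLogRatio.
Variables (R : realType) (a : R).

Definition kappa := a / (a + 2).
Definition shearer_f (y : R) := kappa * logq (y / a) / a.
Definition shearer_s (y : R) := kappa * dlogq (y / a) / a ^+ 2.

Lemma kappa_ge0 : 0 < a -> 0 <= kappa.
Proof. by move=> a_gt0; apply: divr_ge0; lra. Qed.

Lemma kappa_le1 : 0 < a -> kappa <= 1.
Proof. by move=> a_gt0; rewrite /kappa ler_pdivrMr; lra. Qed.

Lemma shearer_f_tangent : 0 < a -> forall x y, 0 <= x -> 0 < y ->
  shearer_f y + shearer_s y * (x - y) <= shearer_f x.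
Proof.
move=> a_gt0 x y x_ge0 y_gt0.
have := logq_tangent (divr_ge0 x_ge0 (ltW a_gt0)) (divr_gt0 y_gt0 a_gt0).
move=> /(ler_wpM2l (divr_ge0 (kappa_ge0 a_gt0) (ltW a_gt0))).
have -> : kappa / a * logq (x / a) = shearer_f x by rewrite /shearer_f; field; lra.
suff -> : kappa / a * (logq (y / a) + dlogq (y / a) * (x / a - y / a))
  = shearer_f y + shearer_s y * (x - y) by [].
by rewrite /shearer_f /shearer_s; field; lra.
Qed.

Lemma shearer_s_le0 : 0 < a -> forall y, 0 < y -> shearer_s y <= 0.
Proof.
move=> a_gt0 y y_gt0; rewrite /shearer_s -mulrA mulr_ge0_le0 ?kappa_ge0 //.
by rewrite mulr_le0_ge0 ?dlogq_le0 ?divr_gt0 // invr_ge0 exprn_ge0 // ltW.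
Qed.

Lemma shearer_f_ge0 : 0 < a -> forall y, 0 < y -> 0 <= shearer_f y.
Proof.
move=> a_gt0 y y_gt0; apply: divr_ge0; last exact: ltW.
by rewrite mulr_ge0 ?kappa_ge0 // ltW // logq_gt0 // divr_gt0.
Qed.

Lemma shearer_f0_le1 : 0 < a -> shearer_f 0 <= 1.
Proof.
move=> a_gt0; rewrite /shearer_f mul0r /logq eqxx mulr1 /kappa.
by rewrite ler_pdivrMr // mul1r ler_pdivrMr; nra.
Qed.

Lemma shearer_f_recurrence : 0 < a -> forall y, 0 < y ->
  0 <= 1 - (y + 1) * shearer_f y + (y - y ^+ 2) * shearer_s y.
Proof.
move=> a_gt0 y y_gt0; set z := y / a.
have z_gt0 : 0 < z by rewrite divr_gt0.
have y_az : y = a * z by rewrite /z; field; lra.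
have dlogqE : dlogq z = ((z + 1)^-1 - logq z) / z.
  by rewrite -(logq_dlogq z_gt0); field; lra.
have logq_le1 := logq_le1 (ltW z_gt0).
rewrite /shearer_f /shearer_s -/z dlogqE y_az.
(* kappa = a / (a + 2) is chosen to make the constant term [1 - kappa - 2 kappa / a] vanish. *)
have -> : 1 - (a * z + 1) * (kappa * logq z / a)
    + (a * z - (a * z) ^+ 2) * (kappa * (((z + 1)^-1 - logq z) / z) / a ^+ 2)
  = kappa / (z + 1) + 2 * kappa * (1 - logq z) / a + kappa / ((z + 1) * a)
    + (1 - kappa - 2 * kappa / a).
  by field; lra.
have -> : 1 - kappa - 2 * kappa / a = 0 by rewrite /kappa; field; lra.
have k_ge0 := kappa_ge0 a_gt0.
have z1_gt0 : 0 < z + 1 by lra.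
have t1 : 0 <= kappa / (z + 1) by rewrite divr_ge0 // ltW.
have t2 : 0 <= 2 * kappa * (1 - logq z) / a.
  by apply: divr_ge0; [nra | exact: ltW].
have t3 : 0 <= kappa / ((z + 1) * a) by rewrite divr_ge0 // mulr_ge0 // ltW.
lra.
Qed.

Lemma shearer_f_lower : 0 < a -> forall lam, 0 < lam ->
  kappa * (ln lam - ln a - 2 / a) <= (lam - 1) * shearer_f lam + lam * shearer_s lam.
Proof.
move=> a_gt0 lam lam_gt0; set z := lam / a.
have z_gt0 : 0 < z by rewrite divr_gt0.
have lam_az : lam = a * z by rewrite /z; field; lra.
have dlogqE : dlogq z = ((z + 1)^-1 - logq z) / z.
  by rewrite -(logq_dlogq z_gt0); field; lra.
have -> : (lam - 1) * shearer_f lam + lam * shearer_s lam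
    = kappa * (ln (z + 1) + (z + 1)^-1 / a - 2 * logq z / a).
  rewrite /shearer_f /shearer_s -/z dlogqE lam_az logqE ?gt_eqF //; field.
  by rewrite !gt_eqF // addr_gt0.
rewrite ler_wpM2l ?kappa_ge0 //.
have ln_z1 : ln lam - ln a <= ln (z + 1).
  by rewrite -ln_div ?posrE // -/z ler_ln ?posrE //; lra.
have inv_ge0 : 0 <= (z + 1)^-1 / a by rewrite divr_ge0 ?invr_ge0 //; lra.
have logq_le : 2 * logq z / a <= 2 / a.
  by rewrite ler_pM2r ?invr_gt0 //; have := logq_le1 (ltW z_gt0); lra.
lra.
Qed.
End ScaledLogRatio.

Lemma kappa_ge_eps (R : realType) (eps : R) : 0 < eps -> 1 - eps / 2 <= kappa (1 + 4 / eps).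
Proof.
move=> eps_gt0; have den_gt0 : 0 < 3 * eps + 4 by lra.
have -> : kappa (1 + 4 / eps) = 1 - 2 * eps / (3 * eps + 4).
  by rewrite /kappa; field; rewrite !gt_eqF.
rewrite lerD2l lerN2 ler_pdivrMr //; nra.
Qed.

Lemma margin_le (R : realType) (eps k L K : R) : 0 < eps -> 1 - eps / 2 <= k <= 1 ->
  0 <= K -> 2 * K / eps <= L -> (1 - eps) * L <= k * (L - K).
Proof.
move=> eps_gt0 /andP[k_ge k_le1] K_ge0; rewrite ler_pdivrMr // => K_le.
have [LK_ge0 | LK_lt0] := leP 0 (L - K); nra.
Qed.

Unset Implicit Arguments.
Local Open Scope classical_set_scope.
Local Open Scope ring_scope.

Theorem lemma5p2 (R : realType) (lam : R -> R)
  (hle : forall d, lam d <= d)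
  (hinf : lam x @[x --> +oo] --> +oo) :
  forall eps : R, 0 < eps ->
  exists d0 : R, forall d : R, d0 <= d ->
  forall (T : finType) (e : rel T), simple_graph e ->
    (2 * num_edges e)%:R <= d * #|T|%:R ->
    (num_triangles e)%:R <= d ^+ 2 * #|T|%:R / lam d ^+ 3 ->
    (1 - eps) * (#|T|%:R * ln (lam d) / d) <= (alpha e)%:R.
Proof.
move=> eps eps_gt0; set a := 1 + 4 / eps; set K := ln a + 2 / a.
have a_ge1 : 1 <= a by rewrite lerDl divr_ge0 // ltW.
have a_gt0 : 0 < a by lra.
have K_ge0 : 0 <= K by rewrite addr_ge0 ?ln_ge0 // divr_ge0 //; lra.
move/cvgryPge: hinf => /(_ (Num.max 1 (expR (2 * K / eps)))) [M [_ lam_large]].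
exists (M + 1) => d M_lt_d T e [e_sym e_irr] edges_le triangles_le.
have : Num.max 1 (expR (2 * K / eps)) <= lam d by apply: lam_large; lra.
rewrite ge_max => /andP[lam_ge1 lam_ge_exp].
have lam_gt0 : 0 < lam d by lra.
have lam_bounds : 0 < lam d <= d by rewrite lam_gt0 hle.
have d_gt0 : 0 < d := lt_le_trans lam_gt0 (hle d).
have ln_lam : 2 * K / eps <= ln (lam d) by rewrite -ler_expR lnK ?posrE.
apply: le_trans (alpha_ge_sampling e_sym e_irr (shearer_f_tangent a_gt0)
  (shearer_s_le0 a_gt0) (shearer_f_recurrence a_gt0) (shearer_f0_le1 a_gt0)
  (shearer_f_ge0 a_gt0) lam_bounds edges_le triangles_le).
have -> : (1 - eps) * (#|T|%:R * ln (lam d) / d) = #|T|%:R / d * ((1 - eps) * ln (lam d)).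
  by field; rewrite gt_eqF.
apply: ler_wpM2l; first by rewrite divr_ge0 // ltW.
apply: le_trans (shearer_f_lower a_gt0 lam_gt0); rewrite -addrA -opprD.
by apply: margin_le; rewrite ?kappa_ge_eps ?kappa_le1.
Qed.
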